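(* Let $X$ be a complex Banach space and $T:X\to X$ a recurrent bounded linear operator. Let $\{T\}'=\{A: A \text{ bounded linear on } X,\ AT=TA\}$ be the commutant of $T$, and suppose there is a subset $\mathcal M\subset\{T\}'$ such that the set $\{x\in X:\overline{\{Ax:A\in\mathcal M\}}=X\}$ is residual in $X$. Then $T\oplus T$ is recurrent on $X\oplus X$.
   Context: An operator $S$ on a Banach space $Y$ is recurrent if for every non-empty open $U\subset Y$ there is a positive integer $k$ with $U\cap S^{-k}(U)\neq\emptyset$. $T\oplus T$ acts on $X\oplus X$ by $(x,y)\mapsto(Tx,Ty)$. A set is residual if it contains a countable intersection of dense open sets. *)

From mathcomp Require Import all_boot all_algebra.
From mathcomp Require Import all_classical all_reals all_analysis.
From mathcomp Require Export complex.
Import numFieldNormedType.Exports.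
Set Implicit Arguments. Unset Strict Implicit. Unset Printing Implicit Defensive.
Local Open Scope classical_set_scope.

Definition recurrent (Y : topologicalType) (S : Y -> Y) : Prop :=
  forall U : set Y, open U -> U !=set0 ->
    exists k : nat, (0 < k)%N /\ (U `&` (iter k S) @^-1` U) !=set0.

Definition residual (Y : topologicalType) (A : set Y) : Prop :=
  exists F : nat -> set Y, (forall n, open (F n) /\ dense (F n)) /\
    \bigcap_n F n `<=` A.

Definition dsum_op (X : Type) (T : X -> X) : X * X -> X * X :=
  fun p => (T p.1, T p.2).

From mathcomp Require Import all_boot all_order all_algebra.
From mathcomp Require Import all_classical all_reals all_analysis.
From mathcomp Require Import complex.
Import Order.TTheory GRing.Theory Num.Theory numFieldNormedType.Exports.
Local Open Scope classical_set_scope.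
Local Open Scope complex_scope.

(* By the Baire category theorem the vectors with M-dense orbit are dense, so
   every nonempty open W in X x X contains a point (x, A x) with A in M.  The
   set U = {y | (y, A y) \in W} is then open and nonempty, recurrence of T gives
   y in U with T^k y in U, and since A commutes with T^k,
   (T (+) T)^k (y, A y) = (T^k y, A (T^k y)) lies in W. *)

Section complex_Baire.
Local Open Scope ring_scope.
Context {R : realType}.

Lemma gtc0_real (e : R[i]) : 0 < e -> exists2 r : R, 0 < r & e = r%:C.
Proof.
move=> e_gt0; have e_real := gtr0_real e_gt0.
by exists (complex.Re e); rewrite ?RRe_real // -ltcR RRe_real.
Qed.

Context {X : completeNormedModType R[i]}.

Lemma nbhs_real_ball {x : X} {A : set X} :
  nbhs x A -> exists2 r : R, 0 < r & ball x r%:C `<=` A.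
Proof. by move=> /nbhs_ballP[_ /gtc0_real[r r_gt0 ->] rA]; exists r. Qed.

Lemma open_dense_ball {D : set X} (x : X) {r b : R} :
  open D -> dense D -> 0 < r -> 0 < b ->
  exists y (s : R), [/\ 0 < s, s <= b & ball y (s + s)%:C `<=` ball x r%:C `&` D].
Proof.
move=> oD dD r_gt0 b_gt0.
have [y [xy Dy]] : ball x r%:C `&` D !=set0.
  by apply: dD; [exists x; apply: ballxx; rewrite ltcR | exact: ball_open].
have [t t_gt0 yt] : exists2 t : R, 0 < t & ball y t%:C `<=` ball x r%:C `&` D.
  by apply/nbhs_real_ball/open_nbhs_nbhs; split=> //; exact: openI (ball_open _ _) oD.
exists y, (Num.min (t / 2) b); split.
- by rewrite lt_min divr_gt0.
- by rewrite ge_min lexx orbT.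
- apply: subset_trans yt; apply: le_ball.
  by rewrite lecR [leRHS]splitr lerD // ge_min lexx.
Qed.

Lemma nested_balls_common_point (a : X^nat) (r : R^nat) :
  (forall n m, (n <= m)%N -> ball (a n) (r n)%:C (a m)) ->
  (forall e, 0 < e -> exists n, r n < e) ->
  exists l, forall n, ball (a n) (r n + r n)%:C l.
Proof.
move=> a_nested r_small.
have /cvg_ex[l a_l] : cvg (a @ \oo).
  apply: cauchy_cvg; apply: cauchy_exP => _ /gtc0_real[e e_gt0 ->].
  have [n rn_e] := r_small e e_gt0.
  exists (a n), n => // m nm.
  by apply: le_ball (a_nested _ _ nm); rewrite lecR ltW.
exists l => n.
have rn_gt0 : 0 < (r n)%:C.
  by have := a_nested n n (leqnn n); rewrite -ball_normE /= subrr normr0.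
have near_l : \forall m \near \oo, ball l (r n)%:C (a m).
  exact: a_l (nbhsx_ballx l _ rn_gt0).
have [m [lam nm]] := filter_ex (filterI near_l (nbhs_infty_ge n)).
by rewrite rmorphD; apply: ball_triangle (a_nested _ _ nm) (ball_sym lam).
Qed.

(* The library's [Baire] only covers normed spaces over a [realType]; over
   [R[i]] positive radii are real, and the nested-ball argument goes through. *)
Theorem complex_Baire (F : (set X)^nat) :
  (forall n, open (F n) /\ dense (F n)) -> dense (\bigcap_n F n).
Proof.
move=> odF D [d Dd] oD.
have [r0 r0_gt0 dD] := nbhs_real_ball (open_nbhs_nbhs (conj oD Dd)).
have step (p : nat * (X * R)) : exists q : X * R, 0 < p.2.2 ->
    [/\ 0 < q.2, q.2 <= p.1.+1%:R^-1
      & ball q.1 (q.2 + q.2)%:C `<=` ball p.2.1 p.2.2%:C `&` F p.1].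
  case: p => n [x r] /=; have [r_gt0|] := boolP (0 < r); last by exists (x, r).
  have n1_gt0 : 0 < n.+1%:R^-1 :> R by rewrite invr_gt0.
  have [y [s sP]] := open_dense_ball x (proj1 (odF n)) (proj2 (odF n)) r_gt0 n1_gt0.
  by exists (y, s).
have [f fP] := choice step.
pose fix c n := if n is k.+1 then f (k, c k) else (d, r0).
pose a n := (c n).1; pose r n := (c n).2.
have r_gt0 n : 0 < r n by elim: n => [//|n IHn]; have [] := fP (n, c n) IHn.
have shrink n : [/\ 0 < r n.+1, r n.+1 <= n.+1%:R^-1
    & ball (a n.+1) (r n.+1 + r n.+1)%:C `<=` ball (a n) (r n)%:C `&` F n].
  exact: fP (n, c n) (r_gt0 n).
have nested n m : (n <= m)%N -> ball (a m) (r m)%:C `<=` ball (a n) (r n)%:C.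
  elim: m => [|m IHm]; first by rewrite leqn0 => /eqP ->.
  rewrite leq_eqVlt => /orP[/eqP -> //|/IHm]; apply: subset_trans.
  have [rm_gt0 _ sub] := shrink m.
  apply: subset_trans (subset_trans sub (@subIsetl _ _ _)).
  by apply: le_ball; rewrite lecR lerDr ltW.
have [l al] : exists l, forall n, ball (a n) (r n + r n)%:C l.
  apply: nested_balls_common_point => [n m nm|e e_gt0].
    by apply: nested nm _ _; apply: ballxx; rewrite ltcR.
  have [k] := ltr_add_invr e_gt0; rewrite add0r => k_e.
  by exists k.+1; have [_ rk _] := shrink k; exact: le_lt_trans rk k_e.
exists l; split; first by have [_ _ /(_ l (al 1%N))[/dD]] := shrink 0%N.
by move=> n _; have [_ _ /(_ l (al n.+1))[]] := shrink n.
Qed.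

Lemma residual_dense {A : set X} : residual A -> dense A.
Proof.
move=> [F [odF FA]] O O0 oO.
by have [x [Ox /FA Ax]] := complex_Baire F odF O O0 oO; exists x.
Qed.

End complex_Baire.

Lemma iter_comm {T : Type} {f g : T -> T} :
  f \o g = g \o f -> forall k x, f (iter k g x) = iter k g (f x).
Proof.
move=> fg; elim=> [//|k IHk] x /=.
by rewrite -IHk; exact: (congr1 (@^~ _) fg).
Qed.

Lemma iter_dsum_op (T : Type) (S : T -> T) (k : nat) (p : T * T) :
  iter k (dsum_op S) p = (iter k S p.1, iter k S p.2).
Proof. by elim: k => [|k /= ->]; case: p. Qed.

Lemma graph_meets_open {Y : topologicalType} {I : Type} (M : set I)
    (act : I -> Y -> Y) :
  dense [set x | closure ((fun i => act i x) @` M) = [set: Y]] ->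
  forall W : set (Y * Y), open W -> W !=set0 ->
  exists2 i, M i & exists z, W (z, act i z).
Proof.
move=> orbits_dense W oW [[a b] Wab].
have [[P Q] /= [Pa Qb] PQW] := open_nbhs_nbhs (conj oW Wab).
have [x [/interior_subset Px orbit_x]] := orbits_dense _ (ex_intro _ a Pa)
  (@open_interior _ P).
have : closure ((fun i => act i x) @` M) b by rewrite orbit_x.
move=> /(_ Q Qb)[_ [[i Mi <-] Qix]].
by exists i => //; exists x; exact: PQW.
Qed.

Lemma recurrent_dsum_op (Y : topologicalType) (S : Y -> Y) :
  recurrent S ->
  (forall W : set (Y * Y), open W -> W !=set0 ->
    exists A : Y -> Y, [/\ continuous A, A \o S = S \o A & exists z, W (z, A z)]) ->
  recurrent (dsum_op S).
Proof.
move=> S_rec graph_dense W oW W0.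
have [A [cA AS [z Wz]]] := graph_dense W oW W0.
have oU : open [set y | W (y, A y)].
  have graph_cont : continuous (fun y => (y, A y)).
    by move=> y; apply: cvg_pair => //; exact: cA.
  exact: (proj1 (continuousP _) graph_cont).
have [k [k_gt0 [y [Wy Wky]]]] := S_rec _ oU (ex_intro _ z Wz).
exists k; split => //; exists (y, A y); split => //.
by rewrite /preimage /= iter_dsum_op /= -(iter_comm AS).
Qed.

Theorem theorem9p1 (R : realType) (X : completeNormedModType R[i])
  (T : {linear X -> X}) (hTc : continuous T) (hTrec : recurrent T)
  (M : set {linear X -> X})
  (hM : forall A : {linear X -> X}, M A -> continuous A /\ A \o T = T \o A)
  (hres : residual [set x : X |
            closure ((fun A : {linear X -> X} => A x) @` M) = [set: X]]) :
  recurrent (dsum_op T : (X * X)%type -> (X * X)%type).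
Proof.
apply: recurrent_dsum_op hTrec _ => W oW W0.
have [A MA [z Wz]] := graph_meets_open M (fun A : {linear X -> X} => A : X -> X)
  (residual_dense hres) W oW W0.
by have [cA AT] := hM A MA; exists A; split => //; exists z.
Qed.
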